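(* Let $p$ be an SCF that is rationalizable within the class of symmetric RUMs, and let $x,y\in X$. If $(x,y)\in T(R^s)$, then every symmetric RUM $(u,g)$ rationalizing $p$ satisfies $u(x)\geq u(y)$. If $(x,y)\in T_P(R^s)$, then every such model satisfies $u(x)>u(y)$.
   Context: $X$ is a finite set of options; $C=\{(x,y): x,y\in X,\ x\neq y\}$; $D\subseteq C$ is a fixed non-empty set with $(x,y)\in D\Rightarrow (y,x)\in D$. An SCF $p$ assigns to each $(x,y)\in D$ a number $p(x,y)>0$ with $p(x,y)+p(y,x)=1$. A RUM is a pair $(u,g)$ with $u:X\to\mathbb{R}$ and $g$ assigning to each $(x,y)\in C$ a density $g(x,y)$ on $\mathbb{R}$ (cdf $G(x,y)$) with $\int v\,g(x,y)(v)\,dv=u(x)-u(y)=:v(x,y)$, $g(x,y)(v)=g(y,x)(-v)$ for all $v$, and connected support. A RUM rationalizes $p$ if $G(x,y)(0)=p(y,x)$ for all $(x,y)\in D$. A RUM is symmetric if $g(x,y)(v(x,y)+\delta)=g(x,y)(v(x,y)-\delta)$ for all $(x,y)\in C$, $\delta\geq0$. The relation $R^s$ on $X$: $(x,y)\in R^s$ iff $x=y$, or $(x,y)\in D$ and $p(x,y)\geq p(y,x)$. For a binary relation $R$ on $X$, $T(R)$ is its transitive closure ($(x,y)\in T(R)$ iff there is a sequence $x_1=x,\dots,x_n=y$, $n\geq2$, with $(x_k,x_{k+1})\in R$ for all $k$), and $T_P(R)$ is the asymmetric part of $T(R)$: $(x,y)\in T(R)$ and $(y,x)\notin T(R)$.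 *)

From HB Require Import structures.
From mathcomp Require Import all_boot all_order all_algebra.
From mathcomp Require Import all_classical all_reals all_analysis.
Set Implicit Arguments. Unset Strict Implicit. Unset Printing Implicit Defensive.
Import Order.TTheory GRing.Theory Num.Theory.
Import numFieldNormedType.Exports.
Local Open Scope classical_set_scope.
Local Open Scope ring_scope.

Section Defs.
Variables (R : realType) (X : finType).

Definition valid_domain (D : X -> X -> Prop) : Prop :=
  (exists x y, D x y) /\ (forall x y, D x y -> x <> y) /\ (forall x y, D x y -> D y x).

Definition is_SCF (D : X -> X -> Prop) (p : X -> X -> R) : Prop :=
  forall x y, D x y -> 0 < p x y /\ p x y + p y x = 1.

Definition is_density (f : R -> R) : Prop :=
  measurable_fun setT f /\ (forall v, 0 <= f v) /\
  (\int[lebesgue_measure]_v (f v)%:E = 1%:E)%E.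

Definition has_mean (f : R -> R) (m : R) : Prop :=
  lebesgue_measure.-integrable setT (fun v => (v * f v)%:E) /\
  (\int[lebesgue_measure]_v (v * f v)%:E = m%:E)%E.

Definition connected_support (f : R -> R) : Prop :=
  connected [set v | 0 < f v].

Definition cdf (f : R -> R) (t : R) : \bar R :=
  (\int[lebesgue_measure]_(v in `]-oo, t]) (f v)%:E)%E.

Definition is_RUM (u : X -> R) (g : X -> X -> R -> R) : Prop :=
  forall x y, x <> y ->
    is_density (g x y) /\ has_mean (g x y) (u x - u y) /\
    (forall v, g x y v = g y x (- v)) /\ connected_support (g x y).

Definition rationalizes (u : X -> R) (g : X -> X -> R -> R)
    (D : X -> X -> Prop) (p : X -> X -> R) : Prop :=
  forall x y, D x y -> cdf (g x y) 0 = (p y x)%:E.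

Definition symmetric_RUM (u : X -> R) (g : X -> X -> R -> R) : Prop :=
  forall x y, x <> y -> forall delta, 0 <= delta ->
    g x y (u x - u y + delta) = g x y (u x - u y - delta).

Definition sym_rationalizable (D : X -> X -> Prop) (p : X -> X -> R) : Prop :=
  exists u g, is_RUM u g /\ symmetric_RUM u g /\ rationalizes u g D p.

Definition Rs (D : X -> X -> Prop) (p : X -> X -> R) (x y : X) : Prop :=
  x = y \/ (D x y /\ p y x <= p x y).

End Defs.

Inductive tclos (T : Type) (Rel : T -> T -> Prop) : T -> T -> Prop :=
  | tclos_step x y : Rel x y -> tclos Rel x y
  | tclos_cons x y z : Rel x y -> tclos Rel y z -> tclos Rel x z.

Definition tclosP (T : Type) (Rel : T -> T -> Prop) (x y : T) : Prop :=
  tclos Rel x y /\ ~ tclos Rel y x.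

(* Under a symmetric RUM, g x y is symmetric about its mean u x - u y, so
   G(x,y) equals 1/2 at the mean.  If the mean is negative, the connected
   support, which cannot reduce to the null set {mean}, contains an interval
   ]mean, b] with b <= 0, so G(x,y)(0) > 1/2.  As G(x,y)(0) = p(y,x), every
   R^s-step (x,y) has u x >= u y, with equality only if
   p(x,y) = p(y,x) = 1/2, i.e. only if (y,x) is an R^s-step as well.  Along a
   chain u is non-increasing, and if u x <= u y every step is an equality, so
   the chain reverses, which T_P(R^s) excludes. *)

From Pilot Require Import Defs.
From HB Require Import structures.
From mathcomp Require Import all_boot all_order all_algebra.
From mathcomp Require Import all_classical all_reals all_analysis.
From mathcomp Require Import measurable_realfun lra.
Set Implicit Arguments.
Unset Strict Implicit.
Unset Printing Implicit Defensive.
Import Order.TTheory GRing.Theory Num.Theory.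
Local Open Scope classical_set_scope.
Local Open Scope ring_scope.

Section mirror.
Context {R : realType}.
Local Notation mu := (@lebesgue_measure R).

Definition mirror (c : R) : measurableTypeR R -> measurableTypeR R :=
  fun v => c - v.

Lemma measurable_mirror (c : R) : measurable_fun setT (mirror c).
Proof. exact: measurable_funB. Qed.

Lemma lebesgue_measure_mirror (c : R) (A : set R) : measurable A ->
  pushforward mu (mirror c) A = mu A.
Proof.
move=> mA; apply/esym/lebesgue_measure_unique => //= [|_ _ [[a b] _ <-]].
  exact: measurable_mirror.
rewrite /pushforward.
have -> : mirror c @^-1` `]a, b]%classic = `[c - b, c - a[%classic.
  by apply/seteqP; split => v; rewrite /mirror /= !in_itv /= => /andP[? ?];
    apply/andP; split; lra.
rewrite !lebesgue_measure_itv /= !lte_fin ltrD2l ltrN2.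
by case: ltP => // _; rewrite -!EFinD; congr EFin; lra.
Qed.

Lemma ge0_integral_mirror (c : R) (D : set R) (h : R -> \bar R) :
  measurable D -> measurable_fun D h -> (forall x, D x -> (0 <= h x)%E) ->
  (\int[mu]_(x in D) h x = \int[mu]_(x in mirror c @^-1` D) h (c - x)%R)%E.
Proof.
move=> mD mh h0.
rewrite -(ge0_integral_pushforward (measurable_mirror c)) //; last first.
  by move=> y /[!inE] /h0.
apply: eq_measure_integral => [|mf A mA _]; first exact: measurable_mirror.
exact/esym/lebesgue_measure_mirror.
Qed.

End mirror.

Section nonneg_integral_itv.
Context {R : realType}.
Local Notation mu := (@lebesgue_measure R).

Lemma ge0_integral_itvNy_split (f : R -> R) (m : R) (b : itv_bound R) :
  measurable_fun setT f -> (forall v, 0 <= f v) -> (BRight m <= b)%O ->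
  (\int[mu]_(v in [set` Interval -oo%O b]) (f v)%:E =
   \int[mu]_(v in `]-oo, m]) (f v)%:E +
   \int[mu]_(v in [set` Interval (BRight m) b]) (f v)%:E)%E.
Proof.
move=> mf f0 mb; rewrite (itv_bndbnd_setU _ mb) //.
rewrite ge0_integral_setU //.
- by apply/measurable_EFinP; exact: measurable_funS mf.
- by move=> v _; rewrite lee_fin.
- by apply: lt_disjoint => x y; rewrite !in_itv /= => xm /andP[my _]; lra.
Qed.

Lemma integral_itv_oc_gt0 (f : R -> R) (a b : R) : a < b ->
  measurable_fun setT f -> (forall v, 0 <= f v) ->
  (forall v, a < v <= b -> 0 < f v) ->
  (0 < \int[mu]_(v in `]a, b]) (f v)%:E)%E.
Proof.
move=> ab mf f0 fp; rewrite lt0e integral_ge0 ?andbT; last first.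
  by move=> x _; rewrite lee_fin.
apply/negP => /eqP int0.
have : ae_eq mu `]a, b]%classic (fun v => (f v)%:E) (cst 0%E).
  apply/ae_eq_integral_abs => //.
    by apply/measurable_EFinP; exact: measurable_funS mf.
  by rewrite -[RHS]int0; apply: eq_integral => x _; rewrite gee0_abs // lee_fin.
case=> N [mN N0 sub].
have abN : `]a, b]%classic `<=` N.
  move=> v abv; apply: sub => /(_ abv) /eqP; rewrite eqe gt_eqF //.
  by apply: fp; move: abv; rewrite /= in_itv.
have : (mu `]a, b]%classic <= mu N)%E.
  by apply: le_measure => //; rewrite inE //; exact: measurable_itv.
rewrite N0 lebesgue_measure_itv /= lte_fin ab -EFinD lee_fin.
by rewrite subr_le0 leNgt ab.
Qed.

End nonneg_integral_itv.

Definition symmetric_about {R : realType} (f : R -> R) (m : R) : Prop :=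
  forall v, f (2 * m - v) = f v.

Section symmetric_density.
Context {R : realType}.
Local Notation mu := (@lebesgue_measure R).
Variables (f : R -> R) (m : R).
Hypotheses (f_density : is_density f) (f_sym : symmetric_about f m).

Let mf : measurable_fun setT f := f_density.1.
Let f_ge0 : forall v, 0 <= f v := f_density.2.1.
Let mEf (D : set R) : measurable_fun D (fun v => (f v)%:E).
Proof. by apply/measurable_EFinP; exact: measurable_funS mf. Qed.

Lemma cdf_symmetric_center : Defs.cdf f m = (2^-1)%:E.
Proof.
have right_tail : (\int[mu]_(v in `]m, +oo[) (f v)%:E = Defs.cdf f m)%E.
  rewrite integral_itv_obnd_cbnd; last exact: mEf.
  rewrite (ge0_integral_mirror (2 * m)) //; last by move=> v _; rewrite lee_fin.
  have -> : mirror (2 * m) @^-1` `[m, +oo[%classic = `]-oo, m]%classic.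
    by apply/seteqP; split => v; rewrite /mirror /= !in_itv /= ?andbT => ?; lra.
  by apply: eq_integral => v _; rewrite f_sym.
have := @ge0_integral_itvNy_split _ f m +oo%O mf f_ge0 isT.
rewrite set_itvE right_tail f_density.2.2 -/(Defs.cdf f m).
have : (0 <= Defs.cdf f m)%E by apply: integral_ge0 => v _; rewrite lee_fin.
case: (Defs.cdf f m) => [r| |] //= r0.
by rewrite -EFinD => -[r1]; congr EFin; lra.
Qed.

Lemma symmetric_density_straddles :
  exists lo hi, [/\ lo < m, m < hi, 0 < f lo & 0 < f hi].
Proof.
have [s [sm fs]] : exists s, s != m /\ 0 < f s.
  apply: contrapT => no_s.
  have f0 v : v != m -> f v = 0.
    move=> vm; apply/eqP; rewrite eq_le f_ge0 andbT leNgt.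
    by apply/negP => fv; apply: no_s; exists v.
  have := cdf_symmetric_center.
  rewrite /Defs.cdf -integral_itv_bndo_bndc // integral0_eq; last first.
    by move=> v /=; rewrite in_itv /= => vm; rewrite f0 // lt_eqF.
  by move/eqP; rewrite eq_sym eqe invr_eq0 pnatr_eq0.
have fs' : 0 < f (2 * m - s) by rewrite f_sym.
case: (ltgtP s m) sm => // [sm|ms] _.
- by exists s, (2 * m - s); split => //; lra.
- by exists (2 * m - s), s; split => //; lra.
Qed.

Lemma cdf0_gt_half : m < 0 -> is_interval [set v | 0 < f v] ->
  ((2^-1)%:E < Defs.cdf f 0)%E.
Proof.
move=> m_lt0 f_itv.
have [lo [hi [lom mhi flo fhi]]] := symmetric_density_straddles.
pose b := Num.min hi 0.
have mb : m < b by rewrite lt_min mhi m_lt0.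
have mass_mb : (0 < \int[mu]_(v in `]m, b]) (f v)%:E)%E.
  apply: integral_itv_oc_gt0 => // v /andP[mv vb].
  apply: (f_itv lo hi) => //; rewrite (ltW (lt_trans lom mv)) /=.
  by move: vb; rewrite le_min => /andP[].
have mass_m0 : (\int[mu]_(v in `]m, b]) (f v)%:E <=
                \int[mu]_(v in `]m, 0%R]) (f v)%:E)%E.
  apply: ge0_subset_integral => //; first exact: mEf.
    by move=> v _; rewrite lee_fin.
  move=> v /=; rewrite !in_itv /= => /andP[-> vb] /=.
  by rewrite (le_trans vb) // ge_min lexx orbT.
rewrite /Defs.cdf (@ge0_integral_itvNy_split _ f m (BRight (0 : R)) mf f_ge0).
  rewrite -/(Defs.cdf f m) cdf_symmetric_center lteDl //.
  exact: lt_le_trans mass_mb mass_m0.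
by rewrite bnd_simp ltW.
Qed.

End symmetric_density.

Lemma tclos_rcons (T : Type) (Rel : T -> T -> Prop) x y z :
  tclos Rel x y -> Rel y z -> tclos Rel x z.
Proof.
elim=> [a b ab bz|a b c ab _ IH cz]; apply: tclos_cons ab _.
- exact: tclos_step.
- exact: IH.
Qed.

Section monotone_closure.
Variables (T : Type) (d : Order.disp_t) (O : porderType d).
Variables (Rel : T -> T -> Prop) (f : T -> O).
Hypothesis Rel_le : forall a b, Rel a b -> (f b <= f a)%O.

Lemma tclos_le x y : tclos Rel x y -> (f y <= f x)%O.
Proof.
elim=> [a b /Rel_le //|a b c /Rel_le ba _ cb].
exact: le_trans cb ba.
Qed.

Hypothesis Rel_sym_of_eq : forall a b, Rel a b -> f a = f b -> Rel b a.

Lemma tclos_sym_of_le x y : tclos Rel x y -> (f x <= f y)%O -> tclos Rel y x.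
Proof.
elim=> [a b ab ab_le|a b c ab bc IH ac_le].
  apply/tclos_step/Rel_sym_of_eq => //.
  by apply/le_anti; rewrite ab_le (Rel_le ab).
have ab_eq : f a = f b.
  by apply/le_anti; rewrite (Rel_le ab) andbT (le_trans ac_le) // tclos_le.
apply: tclos_rcons (Rel_sym_of_eq ab ab_eq).
by apply: IH; rewrite -ab_eq.
Qed.

End monotone_closure.

Section symmetric_RUM.
Variables (R : realType) (X : finType) (u : X -> R) (g : X -> X -> R -> R).
Hypotheses (rum : is_RUM u g) (sym : symmetric_RUM u g).

Lemma symmetric_RUM_about a b : a <> b -> symmetric_about (g a b) (u a - u b).
Proof.
move=> ab v; set m := u a - u b.
have [mv|vm] := leP m v.
- have := sym ab (_ : 0 <= v - m); rewrite subr_ge0 -/m => /(_ mv) sym_v.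
  rewrite [in RHS](_ : v = m + (v - m)) ?sym_v; first by congr (g a b); lra.
  by rewrite addrC subrK.
- have := sym ab (_ : 0 <= m - v); rewrite subr_ge0 -/m => /(_ (ltW vm)) sym_v.
  rewrite (_ : 2 * m - v = m + (m - v)) ?sym_v; first by congr (g a b); lra.
  by lra.
Qed.

Lemma RUM_cdf0_gt_half a b : a <> b -> u a < u b ->
  ((2^-1)%:E < Defs.cdf (g a b) 0)%E.
Proof.
move=> ab ltu; have [dens [_ [_ conn]]] := rum ab.
apply: cdf0_gt_half dens (symmetric_RUM_about ab) _ _.
  by rewrite subr_lt0.
exact: (connected_intervalP _).1 conn.
Qed.

Lemma RUM_cdf0_half a b : a <> b -> u a = u b -> Defs.cdf (g a b) 0 = (2^-1)%:E.
Proof.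
move=> ab equ; have [dens _] := rum ab.
have := cdf_symmetric_center dens (symmetric_RUM_about ab).
by rewrite equ subrr.
Qed.

Variables (D : X -> X -> Prop) (p : X -> X -> R).
Hypotheses (vD : valid_domain D) (scf : is_SCF D p).
Hypothesis rationalized : rationalizes u g D p.

Lemma Rs_utility_le a b : Rs D p a b -> u b <= u a.
Proof.
case=> [-> //|[Dab pba]]; rewrite leNgt; apply/negP => ltu.
have := RUM_cdf0_gt_half (vD.2.1 a b Dab) ltu.
by rewrite rationalized // lte_fin; have [_ ] := scf Dab; lra.
Qed.

Lemma Rs_sym_of_utility_eq a b : Rs D p a b -> u a = u b -> Rs D p b a.
Proof.
case=> [-> _|[Dab pba] equ]; first by left.
have := RUM_cdf0_half (vD.2.1 a b Dab) equ; rewrite rationalized // => -[half].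
by right; split; [exact: vD.2.2 | have [_ ] := scf Dab; lra].
Qed.

End symmetric_RUM.

Theorem corollary3 (R : realType) (X : finType) (D : X -> X -> Prop)
    (p : X -> X -> R) :
  valid_domain D -> is_SCF D p -> sym_rationalizable D p ->
  forall x y : X,
    (tclos (Rs D p) x y ->
       forall (u : X -> R) (g : X -> X -> R -> R),
         is_RUM u g -> symmetric_RUM u g -> rationalizes u g D p ->
         u y <= u x) /\
    (tclosP (Rs D p) x y ->
       forall (u : X -> R) (g : X -> X -> R -> R),
         is_RUM u g -> symmetric_RUM u g -> rationalizes u g D p ->
         u y < u x).
Proof.
move=> vD scf _ x y.
split=> [xy|[xy not_yx]] u g rum sym rationalized;
  have Rs_le := Rs_utility_le rum sym vD scf rationalized.
- exact: (tclos_le Rs_le xy).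
- rewrite ltNge; apply/negP => le_xy; apply: not_yx.
  have Rs_sym := Rs_sym_of_utility_eq rum sym vD scf rationalized.
  exact: (tclos_sym_of_le Rs_le Rs_sym xy le_xy).
Qed.
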